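(* Let $E\in M_n(\mathbb{FT})$ be idempotent. Then there is an idempotent $E'\in M_n(\mathbb{FT})$ such that $E\,\mathcal{D}\,E'$ and all diagonal entries of $E'$ are equal to $0$.
   Context: $\mathbb{FT}$ is $\mathbb{R}$ with $a\oplus b=\max(a,b)$, $a\otimes b=a+b$; $M_n(\mathbb{FT})$ is the semigroup of real $n\times n$ matrices under $(A\otimes B)_{i,j}=\max_k(A_{i,k}+B_{k,j})$. Green's relations on a semigroup $S$ ($S^1$ is $S$ with an identity adjoined if it has none): $a\,\mathcal{R}\,b$ iff $aS^1=bS^1$, $a\,\mathcal{L}\,b$ iff $S^1a=S^1b$, and $a\,\mathcal{D}\,b$ iff there is $c\in S$ with $a\,\mathcal{R}\,c$ and $c\,\mathcal{L}\,b$. *)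

From HB Require Import structures.
From mathcomp Require Import all_boot all_order all_algebra.
From mathcomp Require Import reals.
Set Implicit Arguments. Unset Strict Implicit. Unset Printing Implicit Defensive.
Import Order.TTheory GRing.Theory Num.Theory.
Local Open Scope ring_scope.

(* Tropical (max-plus) matrix product on real (n+1)x(n+1) matrices:
   (A (x) B) i j = max_k (A i k + B k j).  The big max is seeded with
   the k = 0 term, which is itself part of the range, so the value is
   exactly the maximum over all k. *)
Definition tmul (R : realType) (n : nat) (A B : 'M[R]_n.+1) : 'M[R]_n.+1 :=
  \matrix_(i, j) \big[Num.max/(A i ord0 + B ord0 j)]_(k < n.+1) (A i k + B k j).

Definition tidem (R : realType) (n : nat) (E : 'M[R]_n.+1) : Prop :=
  tmul E E = E.

(* Green's relations in the semigroup M_n(FT) (S^1: identity adjoined). *)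
Definition tR (R : realType) (n : nat) (A B : 'M[R]_n.+1) : Prop :=
  (A = B \/ exists X, A = tmul B X) /\ (B = A \/ exists Y, B = tmul A Y).
Definition tL (R : realType) (n : nat) (A B : 'M[R]_n.+1) : Prop :=
  (A = B \/ exists X, A = tmul X B) /\ (B = A \/ exists Y, B = tmul Y A).
Definition tD (R : realType) (n : nat) (A B : 'M[R]_n.+1) : Prop :=
  exists C, tR A C /\ tL C B.

(** An idempotent [E] satisfies [E i j = max_k (E i k + E k j)], so its
    entries obey the triangle inequality. Following maximizing indices from
    [i] towards a fixed target [j] keeps the equality [E i j = E i y + E y j]
    at every visited index [y]; the index set being finite, the walk enters
    a cycle, and at a point [c] of the cycle this equality with [i = y = c]
    forces [E c c = 0]. So every entry factors through a critical index.
    For a map [s] onto the critical indices fixing each of them, the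
    selections [X = E(-, s -)], [Y = E(s -, -)], [F = E(s -, s -)] satisfy
    [E = X Y], [X = E X], [X = X F] and [F = Y X]; hence [E R X L F], and
    [F] is idempotent with zero diagonal. *)
From mathcomp Require Import all_boot all_order all_algebra.
From mathcomp Require Import reals.
Import Order.TTheory GRing.Theory Num.Theory.
Local Open Scope ring_scope.

Lemma iter_periodic (T : finType) (f : T -> T) (x : T) :
  exists m p, (0 < p)%N /\ iter p f (iter m f x) = iter m f x.
Proof.
have /trajectP[m lt_m_ord iter_ord] := looping_order f x.
exists m, (order f x - m)%N; split; first by rewrite subn_gt0.
by rewrite -iterD subnK ?(ltnW lt_m_ord).
Qed.

Section TropicalProduct.
Context {R : realType} {n : nat}.
Implicit Types (A B : 'M[R]_n.+1) (i j k : 'I_n.+1).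

Lemma tmul_ge A B i j k : A i k + B k j <= tmul A B i j.
Proof. by rewrite mxE; apply: le_bigmax. Qed.

Lemma tmul_entry A B i j k0 :
  (forall k, A i k + B k j <= A i k0 + B k0 j) ->
  tmul A B i j = A i k0 + B k0 j.
Proof.
move=> max_k0; apply: le_anti; rewrite tmul_ge andbT mxE.
by apply: bigmax_le => // k _; apply: max_k0.
Qed.

Lemma tmul_argmax A B i j : {k | tmul A B i j = A i k + B k j}.
Proof.
exists (Order.arg_max ord0 xpredT (fun k => A i k + B k j)).
by case: arg_maxP => // k _ max_k; apply: tmul_entry => k'; apply: max_k.
Qed.

Lemma tmul_colsub (s : 'I_n.+1 -> 'I_n.+1) A B :
  tmul A (colsub s B) = colsub s (tmul A B).
Proof. by apply/matrixP => i j; rewrite !mxE; apply: eq_bigr => k _; rewrite !mxE. Qed.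

Lemma tmul_rowsub (s : 'I_n.+1 -> 'I_n.+1) A B :
  tmul (rowsub s A) B = rowsub s (tmul A B).
Proof. by apply/matrixP => i j; rewrite !mxE; apply: eq_bigr => k _; rewrite !mxE. Qed.

End TropicalProduct.

Section Idempotent.
Context {R : realType} {n : nat} (E : 'M[R]_n.+1).
Hypothesis E_idem : tidem E.
Implicit Types (i j k : 'I_n.+1).

Lemma tidem_triangle i k j : E i k + E k j <= E i j.
Proof. by have := tmul_ge E E i j k; rewrite E_idem. Qed.

Lemma tidem_critical_factor i j : exists c, E c c = 0 /\ E i j = E i c + E c j.
Proof.
pose f x := sval (tmul_argmax E E x j).
have f_max x : E x j = E x (f x) + E (f x) j.
  by rewrite -{1}E_idem (svalP (tmul_argmax E E x j)).
have f_path x t : E x j = E x (iter t.+1 f x) + E (iter t.+1 f x) j.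
  elim: t => [|t IHt]; first exact: f_max.
  apply: le_anti; rewrite tidem_triangle andbT iterS.
  by rewrite {1}IHt f_max addrA lerD2r tidem_triangle.
have [m [[|p] [// _ cycle_c]]] := iter_periodic _ f (f i).
exists (iter m f (f i)); split; last by rewrite -iterSr; apply: f_path.
have := f_path (iter m f (f i)) p.
by rewrite cycle_c -{1}(add0r (E _ j)) => /addIr.
Qed.

Lemma critical_retraction :
  exists s : 'I_n.+1 -> 'I_n.+1,
    (forall i, E (s i) (s i) = 0) /\ (forall c, E c c = 0 -> s c = c).
Proof.
have [c0 [c0_crit _]] := tidem_critical_factor ord0 ord0.
exists (fun i => if E i i == 0 then i else c0).
by split=> [i | c /eqP ->] //; case: eqP.
Qed.

Variable s : 'I_n.+1 -> 'I_n.+1.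
Hypothesis s_critical : forall i, E (s i) (s i) = 0.

Lemma tmul_E_colsub : tmul E (colsub s E) = colsub s E.
Proof. by rewrite tmul_colsub E_idem. Qed.

Lemma tmul_rowsub_colsub : tmul (rowsub s E) (colsub s E) = mxsub s s E.
Proof.
rewrite tmul_rowsub tmul_E_colsub.
by apply/matrixP => i j; rewrite !mxE.
Qed.

Lemma tmul_colsub_mxsub : tmul (colsub s E) (mxsub s s E) = colsub s E.
Proof.
apply/matrixP => i j; rewrite (tmul_entry _ _ _ _ j) !mxE s_critical ?addr0 //.
by move=> k; rewrite !mxE tidem_triangle.
Qed.

Lemma mxsub_tidem : tidem (mxsub s s E).
Proof.
have F_rowsub : mxsub s s E = rowsub s (colsub s E).
  by apply/matrixP => i j; rewrite !mxE.
by rewrite /tidem {1}F_rowsub tmul_rowsub tmul_colsub_mxsub -F_rowsub.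
Qed.

Hypothesis s_id_critical : forall c, E c c = 0 -> s c = c.

Lemma tmul_colsub_rowsub : tmul (colsub s E) (rowsub s E) = E.
Proof.
apply/matrixP => i j; have [c [c_crit E_ij]] := tidem_critical_factor i j.
rewrite (tmul_entry _ _ _ _ c) !mxE s_id_critical // => k.
by rewrite !mxE -E_ij tidem_triangle.
Qed.

End Idempotent.

Theorem theorem6p2 (R : realType) (n : nat) (E : 'M[R]_n.+1) :
  tidem E ->
  exists E' : 'M[R]_n.+1,
    tidem E' /\ tD E E' /\ (forall i, E' i i = 0).
Proof.
move=> E_idem; have [s [s_crit s_id]] := critical_retraction E E_idem.
exists (mxsub s s E); split; [exact: mxsub_tidem | split].
- exists (colsub s E); split; split; right.
  + by exists (rowsub s E); rewrite tmul_colsub_rowsub.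
  + by exists (colsub s E); rewrite tmul_E_colsub.
  + by exists (colsub s E); rewrite tmul_colsub_mxsub.
  + by exists (rowsub s E); rewrite tmul_rowsub_colsub.
- by move=> i; rewrite mxE s_crit.
Qed.
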